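(* Let $q\in(0,1)$ and let $W\in\mathbb{R}^{I\times I}$ be a nonnegative matrix with $W\mathbf{1}=\mathbf{1}$ and $\mathbf{1}^*W=\mathbf{1}^*$. Consider the Synchronous Asymmetric Gossip Algorithm: at each time $t$, every node $i\in I$ independently (of the other nodes and of the past) samples a node $j_i$ with probability $W_{i,j_i}$, and all nodes simultaneously update $x_i(t+1)=(1-q)x_i(t)+qx_{j_i}(t)$. Then for every $t\ge0$, $$\mathbb{E}[(\bar x(t)-\bar x(0))^2]\le\frac{q}{N(1-q)+q}V(x(0)).$$
   Context: $I$ is a finite set of $N$ nodes, $x(0)\in\mathbb{R}^I$ deterministic. $\mathbf{1}$ is the all-ones vector, $W^*$ the transpose. For $y\in\mathbb{R}^I$, $\bar y=\frac1N\sum_i y_i$ and $V(y)=\frac1N\sum_i(y_i-\bar y)^2$. *)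

From HB Require Import structures.
From mathcomp Require Import all_boot all_order all_algebra.
Set Implicit Arguments. Unset Strict Implicit. Unset Printing Implicit Defensive.
Import Order.TTheory GRing.Theory Num.Theory.
Local Open Scope ring_scope.

Section Gossip.
Variables (R : realFieldType) (I : finType).

Definition avg (y : I -> R) : R := (#|I|%:R)^-1 * \sum_(i : I) y i.

Definition var (y : I -> R) : R :=
  (#|I|%:R)^-1 * \sum_(i : I) (y i - avg y) ^+ 2.

Definition sag_step (q : R) (j : {ffun I -> I}) (x : I -> R) : I -> R :=
  fun i => (1 - q) * x i + q * x (j i).

(* probability of the joint choice j at one time step: nodes choose
   independently, node i picks j i with probability W i (j i) *)
Definition choice_prob (W : I -> I -> R) (j : {ffun I -> I}) : R :=
  \prod_(i : I) W i (j i).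

(* sag_expect W q t x F = E[F(x(t))] when x(0) = x, the choices at the
   different times being independent (Markov chain, expectation computed
   by conditioning on the first step). *)
Fixpoint sag_expect (W : I -> I -> R) (q : R) (t : nat) (x : I -> R)
    (F : (I -> R) -> R) : R :=
  match t with
  | O => F x
  | S t' => \sum_(j : {ffun I -> I}) choice_prob W j *
              sag_expect W q t' (sag_step q j x) F
  end.

End Gossip.

From HB Require Import structures.
From mathcomp Require Import all_boot all_order all_algebra.
From mathcomp Require Import ring.
Set Implicit Arguments. Unset Strict Implicit. Unset Printing Implicit Defensive.
Import Order.TTheory GRing.Theory Num.Theory.
Local Open Scope ring_scope.

(* Write N = #|I|, c = avg x(0) and a = q / (N (1 - q) + q).  The
   proof is a Lyapunov argument: the quantity
       L(x) = (avg x - c)^2 + a * var x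
   does not increase in expectation along one step of the algorithm.  Since
   var >= 0 it dominates the observed quantity (avg x - c)^2, and at time 0 it
   equals a * var x(0), which gives the bound for every t by induction. *)

Section Expectation.
Variables (R : realFieldType) (I : finType) (W : I -> I -> R).
Hypothesis hWnn : forall i j, 0 <= W i j.
Hypothesis hWrow : forall i, \sum_(j : I) W i j = 1.

Definition expect (f : {ffun I -> I} -> R) : R :=
  \sum_(j : {ffun I -> I}) choice_prob W j * f j.

Lemma eq_expect (f g : {ffun I -> I} -> R) :
  (forall j, f j = g j) -> expect f = expect g.
Proof. by move=> fg; apply: eq_bigr => j _; rewrite fg. Qed.

Lemma expect_lin (a b : R) (f g : {ffun I -> I} -> R) :
  expect (fun j => a * f j + b * g j) = a * expect f + b * expect g.
Proof.
by rewrite /expect !mulr_sumr -big_split; apply: eq_bigr => j _ /=; ring.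
Qed.

Lemma expect_sum (K : finType) (f : K -> {ffun I -> I} -> R) :
  expect (fun j => \sum_(k : K) f k j) = \sum_(k : K) expect (f k).
Proof.
rewrite /expect; under eq_bigr do rewrite mulr_sumr.
exact: exchange_big.
Qed.

Lemma expect_le (f g : {ffun I -> I} -> R) :
  (forall j, f j <= g j) -> expect f <= expect g.
Proof.
move=> fg; apply: ler_sum => j _; apply: ler_wpM2l (fg j).
by apply: prodr_ge0 => i _.
Qed.

(* The nodes choose independently: the expectation of a product of functions
   of the individual choices is the product of their expectations. *)
Lemma expect_prod (g : I -> I -> R) :
  expect (fun j => \prod_(i : I) g i (j i)) = \prod_(i : I) \sum_(a : I) W i a * g i a.
Proof.
rewrite bigA_distr_bigA /=; apply: eq_bigr => j _.
by rewrite /choice_prob -big_split.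
Qed.

Lemma prod_single (k : I) (h : I -> R) :
  \prod_(i : I) (if i == k then h i else 1) = h k.
Proof. by rewrite (bigD1 k) //= eqxx big1 ?mulr1 // => i /negbTE ->. Qed.

(* Each row of W is a probability distribution, so the nodes that a function
   does not look at contribute a factor 1. *)
Lemma expect_cst (c : R) : expect (fun=> c) = c.
Proof.
have mass1 : expect (fun j => \prod_(i : I) 1) = 1.
  rewrite (expect_prod (fun _ _ => 1)) big1 // => i _.
  by under eq_bigr do rewrite mulr1.
rewrite -[RHS]mul1r -mass1 /expect mulr_suml.
by apply: eq_bigr => j _; rewrite big1_eq !mulr1.
Qed.

Lemma expect_node (k : I) (f : I -> R) :
  expect (fun j => f (j k)) = \sum_(a : I) W k a * f a.
Proof.
transitivity (expect (fun j => \prod_(i : I) (if i == k then f (j i) else 1))).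
  by apply: eq_expect => j; rewrite (prod_single k (fun i => f (j i))).
rewrite (expect_prod (fun i a => if i == k then f a else 1)) (bigD1 k) //= eqxx.
rewrite [\prod_(i | _) _]big1 ?mulr1 // => i /negbTE ik; rewrite -[RHS](hWrow i).
by apply: eq_bigr => a _; rewrite ik mulr1.
Qed.

Lemma expect_nodes2 (k l : I) (f g : I -> R) : k != l ->
  expect (fun j => f (j k) * g (j l))
  = (\sum_(a : I) W k a * f a) * (\sum_(a : I) W l a * g a).
Proof.
move=> kl.
pose h i a := (if i == k then f a else 1) * (if i == l then g a else 1).
have -> : expect (fun j => f (j k) * g (j l)) = expect (fun j => \prod_(i : I) h i (j i)).
  apply: eq_expect => j; rewrite big_split /=.
  by rewrite (prod_single k (fun i => f (j i))) (prod_single l (fun i => g (j i))).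
rewrite expect_prod (bigD1 k) //= [\prod_(i | _) _](bigD1 l) /=; last by rewrite eq_sym.
rewrite /h !eqxx (negbTE kl) eq_sym (negbTE kl) [\prod_(i | _) _]big1 ?mulr1; last first.
  move=> i /andP[ik il]; rewrite (negbTE ik) (negbTE il) -[RHS](hWrow i).
  by apply: eq_bigr => a _; rewrite !mulr1.
by congr (_ * _); apply: eq_bigr => a _; rewrite ?mulr1 ?mul1r.
Qed.

Lemma expect_sqr_sum (g : I -> I -> R) :
  expect (fun j => (\sum_(i : I) g i (j i)) ^+ 2)
  = (\sum_(i : I) \sum_(a : I) W i a * g i a) ^+ 2
    + \sum_(i : I) (\sum_(a : I) W i a * g i a ^+ 2
                    - (\sum_(a : I) W i a * g i a) ^+ 2).
Proof.
have sq_sum (x : I -> R) : (\sum_(i : I) x i) ^+ 2 = \sum_(k : I) \sum_(l : I) x k * x l.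
  by rewrite expr2 mulr_suml; apply: eq_bigr => k _; rewrite mulr_sumr.
rewrite (eq_expect (fun j => sq_sum (fun i => g i (j i)))) expect_sum sq_sum.
rewrite -big_split; apply: eq_bigr => k _ /=.
rewrite expect_sum (bigD1 k) //= [in RHS](bigD1 k) //=.
rewrite (eq_expect (fun j => esym (expr2 (g k (j k))))).
rewrite (expect_node k (fun a => g k a ^+ 2)) [X in _ + X = _](eq_bigr (fun l =>
    (\sum_(a : I) W k a * g k a) * \sum_(a : I) W l a * g l a)).
  by ring.
by move=> l lk; rewrite expect_nodes2 // eq_sym.
Qed.

Lemma sag_expect_le (q : R) (F Phi : (I -> R) -> R) :
  (forall x, F x <= Phi x) ->
  (forall x, expect (fun j => Phi (sag_step q j x)) <= Phi x) ->
  forall t x, sag_expect W q t x F <= Phi x.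
Proof.
move=> hF hPhi; elim=> [|t IH] x /=; first exact: hF.
exact: le_trans (expect_le (fun j => IH _)) (hPhi x).
Qed.

End Expectation.

Section Variance.
Variables (R : realFieldType) (I : finType).
Local Notation N := (#|I|%:R : R).

Lemma sum_eq_avg (y : I -> R) : (0 < #|I|)%N -> \sum_(i : I) y i = N * avg y.
Proof. by move=> I0; rewrite /avg mulrA divff ?mul1r // pnatr_eq0 -lt0n. Qed.

Lemma sum_sq_sub (u v : I -> R) :
  \sum_(i : I) (u i - v i) ^+ 2
  = \sum_(i : I) u i ^+ 2 - 2 * \sum_(i : I) u i * v i + \sum_(i : I) v i ^+ 2.
Proof.
rewrite (eq_bigr (fun i => u i ^+ 2 + (-2) * (u i * v i) + v i ^+ 2)).
  by rewrite !big_split /= -mulr_sumr; ring.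
by move=> i _; ring.
Qed.

Lemma sum_sq_shift (y : I -> R) (c : R) :
  \sum_(i : I) (y i - c) ^+ 2
  = \sum_(i : I) y i ^+ 2 - 2 * c * \sum_(i : I) y i + N * c ^+ 2.
Proof. by rewrite (sum_sq_sub y (fun=> c)) -mulr_suml sumr_const mulr_natl; ring. Qed.

Lemma var_shift (y : I -> R) (c : R) : (0 < #|I|)%N ->
  var y = N^-1 * \sum_(i : I) (y i - c) ^+ 2 - (avg y - c) ^+ 2.
Proof.
move=> I0; have N0 : N != 0 by rewrite pnatr_eq0 -lt0n.
by rewrite /var !sum_sq_shift (sum_eq_avg y I0); field.
Qed.

Lemma avg_shift (y : I -> R) (c : R) : (0 < #|I|)%N ->
  avg y - c = N^-1 * \sum_(i : I) (y i - c).
Proof.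
move=> I0; have N0 : N != 0 by rewrite pnatr_eq0 -lt0n.
by rewrite sumrB sumr_const (sum_eq_avg y I0) -mulr_natr; field.
Qed.

Lemma var_ge0 (y : I -> R) : 0 <= var y.
Proof.
by apply: mulr_ge0; [rewrite invr_ge0 | apply: sumr_ge0 => i _; apply: sqr_ge0].
Qed.

Definition lyap (a c : R) (y : I -> R) : R := (avg y - c) ^+ 2 + a * var y.

Lemma drift_le_lyap (a c : R) (y : I -> R) : 0 <= a -> (avg y - c) ^+ 2 <= lyap a c y.
Proof. by move=> a0; rewrite /lyap lerDl mulr_ge0 ?var_ge0. Qed.

(* In terms of deviations w i = y i - c, L is a combination of the squared
   total and the sum of squares, the quantities whose expectations after one
   step are computable. *)
Lemma lyap_dev (a c : R) (y w : I -> R) :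
  (0 < #|I|)%N -> (forall i, y i - c = w i) ->
  lyap a c y = (1 - a) * N^-2 * (\sum_(i : I) w i) ^+ 2
               + a * N^-1 * \sum_(i : I) w i ^+ 2.
Proof.
move=> I0 dev; rewrite /lyap (var_shift y c I0) (avg_shift y c I0).
have -> : \sum_(i : I) (y i - c) = \sum_(i : I) w i by apply: eq_bigr => i _.
have -> : \sum_(i : I) (y i - c) ^+ 2 = \sum_(i : I) w i ^+ 2.
  by apply: eq_bigr => i _; rewrite dev.
by rewrite exprMn exprVn; ring.
Qed.

(* When I is empty, avg and var vanish, so L is constant. *)
Lemma lyap_empty (a c : R) (y : I -> R) : #|I| = 0%N -> lyap a c y = c ^+ 2.
Proof. by move=> I0; rewrite /lyap /var /avg I0 invr0 !mul0r mulr0 addr0 sub0r sqrrN. Qed.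

End Variance.

Section OneStep.
Variables (R : realFieldType) (I : finType) (W : I -> I -> R) (q : R).
Hypothesis hWrow : forall i, \sum_(j : I) W i j = 1.
Hypothesis hWcol : forall j, \sum_(i : I) W i j = 1.
Local Notation N := (#|I|%:R : R).

Definition mix (w : I -> R) (i a : I) : R := (1 - q) * w i + q * w a.

Definition mulW (w : I -> R) (i : I) : R := \sum_(a : I) W i a * w a.

Lemma sum_mulW (w : I -> R) : \sum_(i : I) mulW w i = \sum_(i : I) w i.
Proof.
rewrite /mulW exchange_big /=; apply: eq_bigr => a _.
by rewrite -mulr_suml hWcol mul1r.
Qed.

Lemma mix_mean (w : I -> R) (i : I) :
  \sum_(a : I) W i a * mix w i a = (1 - q) * w i + q * mulW w i.
Proof.
rewrite (eq_bigr (fun a => (1 - q) * w i * W i a + q * (W i a * w a))); last first.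
  by move=> a _; rewrite /mix; ring.
by rewrite big_split /= -!mulr_sumr hWrow mulr1.
Qed.

Lemma mix_mom2 (w : I -> R) (i : I) :
  \sum_(a : I) W i a * mix w i a ^+ 2
  = (1 - q) ^+ 2 * w i ^+ 2 + 2 * q * (1 - q) * (w i * mulW w i)
    + q ^+ 2 * mulW (fun a => w a ^+ 2) i.
Proof.
rewrite (eq_bigr (fun a => (1 - q) ^+ 2 * w i ^+ 2 * W i a
    + 2 * q * (1 - q) * w i * (W i a * w a) + q ^+ 2 * (W i a * w a ^+ 2))).
  by rewrite !big_split /= -!mulr_sumr hWrow; rewrite /mulW; ring.
by move=> a _; rewrite /mix; ring.
Qed.

(* Squared total after one step: the total is preserved in mean, and its
   variance is the sum of the nodes' variances q^2 ((W w^2)_i - (W w)_i^2). *)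
Lemma expect_step_sum_sq (w : I -> R) :
  expect W (fun j => (\sum_(i : I) mix w i (j i)) ^+ 2)
  = (\sum_(i : I) w i) ^+ 2
    + q ^+ 2 * (\sum_(i : I) w i ^+ 2 - \sum_(i : I) mulW w i ^+ 2).
Proof.
rewrite (expect_sqr_sum hWrow (mix w)).
under eq_bigr do rewrite mix_mean.
under [X in _ + X]eq_bigr do rewrite mix_mean mix_mom2.
have total_mean : \sum_(i : I) ((1 - q) * w i + q * mulW w i) = \sum_(i : I) w i.
  by rewrite big_split /= -!mulr_sumr sum_mulW; ring.
rewrite total_mean [X in _ + X = _](eq_bigr (fun i =>
    q ^+ 2 * mulW (fun a => w a ^+ 2) i + (- q ^+ 2) * mulW w i ^+ 2)).
  by rewrite big_split /= -!mulr_sumr (sum_mulW (fun a => w a ^+ 2)); ring.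
by move=> i _; ring.
Qed.

Lemma expect_step_sq_sum (w : I -> R) :
  expect W (fun j => \sum_(i : I) mix w i (j i) ^+ 2)
  = ((1 - q) ^+ 2 + q ^+ 2) * \sum_(i : I) w i ^+ 2
    + 2 * q * (1 - q) * \sum_(i : I) w i * mulW w i.
Proof.
rewrite expect_sum.
under eq_bigr do rewrite (expect_node hWrow _ (fun a => mix w _ a ^+ 2)).
under eq_bigr do rewrite mix_mom2.
by rewrite !big_split /= -!mulr_sumr (sum_mulW (fun a => w a ^+ 2)); ring.
Qed.

Definition sag_factor : R := q / (N * (1 - q) + q).

Hypotheses (hq0 : 0 < q) (hq1 : q < 1).

Lemma sag_denom_gt0 : 0 < N * (1 - q) + q.
Proof. by rewrite ltr_wpDl // mulr_ge0 // subr_ge0 ltW. Qed.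

Lemma sag_factor_ge0 : 0 <= sag_factor.
Proof. by rewrite divr_ge0 ?ltW ?sag_denom_gt0. Qed.

(* The one-step decrease of L, as a polynomial identity in the moments
   s = sum w, A = sum w^2, B = sum w (W w), Z = sum (W w)^2; the value of
   sag_factor makes the decrease proportional to A - 2 B + Z. *)
Lemma lyap_gap (s A B Z : R) : N != 0 ->
  (1 - sag_factor) * N^-2 * s ^+ 2 + sag_factor * N^-1 * A
  - ((1 - sag_factor) * N^-2 * (s ^+ 2 + q ^+ 2 * (A - Z))
     + sag_factor * N^-1 * (((1 - q) ^+ 2 + q ^+ 2) * A + 2 * q * (1 - q) * B))
  = q ^+ 2 * (1 - q) / (N * (N * (1 - q) + q)) * (A - 2 * B + Z).
Proof.
by move=> N0; rewrite /sag_factor; field; rewrite N0 (gt_eqF sag_denom_gt0).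
Qed.

Lemma lyap_step (c : R) (x : I -> R) :
  expect W (fun j => lyap sag_factor c (sag_step q j x)) <= lyap sag_factor c x.
Proof.
have [I0 | Ipos] := posnP #|I|.
  rewrite (eq_expect W (fun j => lyap_empty _ c (sag_step q j x) I0)).
  by rewrite expect_cst // lyap_empty.
pose w i := x i - c.
have shift j i : sag_step q j x i - c = mix w i (j i).
  by rewrite /sag_step /mix /w; ring.
rewrite (eq_expect W (fun j => lyap_dev _ Ipos (shift j))) expect_lin.
rewrite expect_step_sum_sq expect_step_sq_sum (lyap_dev _ Ipos (w := w)) //.
rewrite -subr_ge0 lyap_gap ?pnatr_eq0 -?lt0n // -sum_sq_sub.
have coef_ge0 : 0 <= q ^+ 2 * (1 - q) / (N * (N * (1 - q) + q)).
  by rewrite divr_ge0 ?mulr_ge0 ?sqr_ge0 ?ler0n ?subr_ge0 ?ltW ?sag_denom_gt0.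
by rewrite mulr_ge0 ?sumr_ge0 // => i _; apply: sqr_ge0.
Qed.

End OneStep.

Theorem mainTheorem12 (R : realFieldType) (I : finType)
  (q : R) (W : I -> I -> R) (x0 : I -> R)
  (hq0 : 0 < q) (hq1 : q < 1)
  (hWnn : forall i j, 0 <= W i j)
  (hWrow : forall i, \sum_(j : I) W i j = 1)
  (hWcol : forall j, \sum_(i : I) W i j = 1) :
  forall t : nat,
    sag_expect W q t x0 (fun x => (avg x - avg x0) ^+ 2)
    <= q / (#|I|%:R * (1 - q) + q) * var x0.
Proof.
move=> t.
have lyap_x0 : lyap (sag_factor I q) (avg x0) x0 = q / (#|I|%:R * (1 - q) + q) * var x0.
  by rewrite /lyap subrr expr0n add0r.
rewrite -lyap_x0; apply: (sag_expect_le hWnn) => x.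
  exact/drift_le_lyap/sag_factor_ge0.
exact: lyap_step.
Qed.
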